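(* The square root of $2$ is irrational in the Zykov field: there is no element $x$ of the Zykov field with $x\cdot x=K_2$ (where $K_2=K_1+K_1$ plays the role of $2$).
   Context: Graphs are finite simple graphs up to isomorphism. The Zykov join of $G=(V,E)$, $H=(W,F)$ is $G+H=(V\cup W,\,E\cup F\cup\{\{v,w\}:v\in V,w\in W\})$, and the Zykov product $G\cdot H$ has vertex set $V\times W$ with $(a,b)\sim(c,d)$ iff $\{a,c\}\in E$ or $\{b,d\}\in F$. The Zykov ring is the Grothendieck group of (graphs, $+$) with $\cdot$ extended bilinearly; it is an integral domain, and the Zykov field is its field of fractions. *)

From mathcomp Require Import all_boot.
Unset Implicit Arguments. Unset Strict Implicit. Unset Printing Implicit Defensive.

Record graph := Graph {
  gV : finType;
  gadj : rel gV;
  gadj_sym : symmetric gadj;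
  gadj_irr : irreflexive gadj }.
Arguments gadj {g}.
Arguments Graph {gV gadj}.

Definition giso (G H : graph) : Prop :=
  exists f : gV G -> gV H, bijective f /\
    forall x y, gadj (f x) (f y) = gadj x y.

Definition empty_adj : rel void := fun _ _ => false.
Lemma empty_sym : symmetric empty_adj. Proof. by []. Qed.
Lemma empty_irr : irreflexive empty_adj. Proof. by []. Qed.
Definition gempty : graph := Graph empty_sym empty_irr.

Definition K1_adj : rel unit := fun _ _ => false.
Lemma K1_sym : symmetric K1_adj. Proof. by []. Qed.
Lemma K1_irr : irreflexive K1_adj. Proof. by []. Qed.
Definition K1 : graph := Graph K1_sym K1_irr.

Definition join_adj (G H : graph) : rel (gV G + gV H)%type :=
  fun u v => match u, v with
  | inl a, inl b => gadj a b
  | inr a, inr b => gadj a b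
  | _, _ => true
  end.
Lemma join_sym G H : symmetric (join_adj G H).
Proof. by case=> a [] b //=; rewrite gadj_sym. Qed.
Lemma join_irr G H : irreflexive (join_adj G H).
Proof. by case=> a /=; rewrite gadj_irr. Qed.
Definition gjoin (G H : graph) : graph := Graph (@join_sym G H) (@join_irr G H).

Definition prod_adj (G H : graph) : rel (gV G * gV H)%type :=
  fun u v => gadj u.1 v.1 || gadj u.2 v.2.
Lemma prod_sym G H : symmetric (prod_adj G H).
Proof. by case=> a b [c d]; rewrite /prod_adj /= gadj_sym [gadj b _]gadj_sym. Qed.
Lemma prod_irr G H : irreflexive (prod_adj G H).
Proof. by case=> a b; rewrite /prod_adj /= !gadj_irr. Qed.
Definition gprod (G H : graph) : graph := Graph (@prod_sym G H) (@prod_irr G H).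

(** The Zykov ring: Grothendieck group of (graphs/iso, join), elements are
    formal differences (A, B) = A - B, with the standard Grothendieck
    equivalence (A,B) ~ (C,D) iff A + D + E ~= C + B + E for some E. *)
Definition zyk := (graph * graph)%type.

Definition zeq (x y : zyk) : Prop :=
  exists E : graph, giso (gjoin (gjoin x.1 y.2) E) (gjoin (gjoin y.1 x.2) E).

Definition zadd (x y : zyk) : zyk := (gjoin x.1 y.1, gjoin x.2 y.2).
(** Bilinear extension of the Zykov product:
    (A - B)(C - D) = (AC + BD) - (AD + BC). *)
Definition zmul (x y : zyk) : zyk :=
  (gjoin (gprod x.1 y.1) (gprod x.2 y.2), gjoin (gprod x.1 y.2) (gprod x.2 y.1)).
Definition zzero : zyk := (gempty, gempty).
Definition zone : zyk := (K1, gempty).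
Definition K2 : graph := gjoin K1 K1.
Definition ztwo : zyk := (K2, gempty).

(** The Zykov field: field of fractions of the Zykov ring, elements are
    pairs (p, q) with q <> 0, with (p,q) = (r,s) iff p s = r q. *)
Record zfrac := ZFrac { znum : zyk; zden : zyk; zden_neq0 : ~ zeq zden zzero }.

Definition feq (x y : zfrac) : Prop :=
  zeq (zmul (znum x) (zden y)) (zmul (znum y) (zden x)).

(** product of fractions; the denominator stays nonzero because the Zykov
    ring is an integral domain, so we only define the product's components. *)
Definition fmul_num (x y : zfrac) : zyk := zmul (znum x) (znum y).
Definition fmul_den (x y : zfrac) : zyk := zmul (zden x) (zden y).

Lemma zone_neq0 : ~ zeq zone zzero.
Proof.
move=> [E [f [fbij _]]].
have := bij_eq_card fbij.
rewrite !card_sum /= !card_void card_unit.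
by move=> /eqP; rewrite -addnA eqn_add2r.
Qed.

Definition ftwo : zfrac := ZFrac ztwo zone zone_neq0.

(** x * x = y in the Zykov field (the product x*x has numerator
    num x * num x and denominator den x * den x). *)
Definition fsq_eq (x y : zfrac) : Prop :=
  zeq (zmul (fmul_num x x) (zden y)) (zmul (znum y) (fmul_den x x)).

(* For a finite pattern on a type T, given by a relation r whose pairs must be
   sent to non-adjacent vertices and a relation e whose pairs must be sent to
   equal vertices, count the admissible maps T -> V(G).  The count is
   multiplicative for the Zykov product, since non-adjacency in G . H means
   non-adjacency in both factors, and additive for the join when the pattern is
   nonempty and connected, since the two sides of a join are completely joined
   and a connected pattern therefore lands in one side.  So each such pattern
   induces a ring homomorphism from the Zykov ring to Z, and x * x = 2 with
   x = (A - B) / (C - D) yields (a - b)^2 = 2 (c - d)^2 in Z, hence c = d.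
   Counts of disconnected patterns factor through connected ones, and a Moebius
   inversion over the kernels of the maps turns equal counts into injections
   C -> D and D -> C preserving non-adjacency; comparing numbers of non-adjacent
   pairs makes them isomorphisms, so C - D = 0, against the nonzero denominator. *)

From mathcomp Require Import all_boot all_algebra zify ring.
Import GRing.Theory.
Set Implicit Arguments. Unset Strict Implicit. Unset Printing Implicit Defensive.

Section Homs.
Variables (T : finType) (r e : rel T).

Definition is_hom (G : graph) (f : {ffun T -> gV G}) : bool :=
  [forall x, forall y, (r x y ==> ~~ gadj (f x) (f y)) && (e x y ==> (f x == f y))].

Definition homs (G : graph) : {set {ffun T -> gV G}} := [set f | is_hom f].

Definition hom_count (G : graph) : nat := #|homs G|.

Lemma is_homP G (f : {ffun T -> gV G}) :
  reflect ((forall x y, r x y -> ~~ gadj (f x) (f y)) /\ (forall x y, e x y -> f x = f y))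
          (is_hom f).
Proof.
apply: (iffP forallP) => [f_hom | [fr fe] x].
  split=> x y; have /forallP/(_ y)/andP[/implyP fr /implyP fe] := f_hom x.
    exact: fr.
  by move/fe/eqP.
by apply/forallP => y; apply/andP; split; [apply/implyP/fr | apply/implyP => /fe ->].
Qed.

Lemma is_hom_const G (c : gV G) : is_hom [ffun=> c].
Proof. by apply/is_homP; split=> x y; rewrite !ffunE ?gadj_irr. Qed.

Lemma hom_count_embedding G H (phi : gV G -> gV H) :
    injective phi -> (forall a b, gadj (phi a) (phi b) = gadj a b) ->
  hom_count G = #|[set f in homs H | [forall x, f x \in codom phi]]|.
Proof.
move=> phi_inj phi_adj; pose lift (g : {ffun T -> gV G}) := [ffun x => phi (g x)].
have lift_inj : injective lift.
  move=> g g' /ffunP eq_lift; apply/ffunP => x.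
  by apply: phi_inj; have := eq_lift x; rewrite !ffunE.
rewrite /hom_count -(card_imset _ lift_inj); apply: eq_card => f; rewrite !inE.
apply/imsetP/andP => [[g] | [/is_homP[fr fe] /forallP f_phi]].
  rewrite inE => /is_homP[gr ge] ->; split; last first.
    by apply/forallP => x; rewrite ffunE codom_f.
  by apply/is_homP; split=> x y; rewrite !ffunE ?phi_adj; [apply: gr | move/ge ->].
have /fin_all_exists[g gP] : forall x, exists a, f x = phi a by move=> x; apply/codomP.
exists [ffun x => g x]; last by apply/ffunP => x; rewrite !ffunE -gP.
rewrite inE; apply/is_homP; split=> x y; rewrite !ffunE.
  by rewrite -phi_adj -!gP; apply: fr.
by move/fe; rewrite !gP => /phi_inj.
Qed.

Lemma hom_count_giso G H : giso G H -> hom_count G = hom_count H.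
Proof.
move=> [phi [phi_bij phi_adj]]; rewrite (hom_count_embedding (bij_inj phi_bij) phi_adj).
apply: eq_card => f; rewrite !inE andb_idr // => _.
have [psi _ psiK] := phi_bij.
by apply/forallP => x; apply/codomP; exists (psi (f x)); rewrite psiK.
Qed.

Lemma hom_count_gprod G H : hom_count (gprod G H) = hom_count G * hom_count H.
Proof.
rewrite /hom_count -cardsX.
pose pair (p : {ffun T -> gV G} * {ffun T -> gV H}) : {ffun T -> gV (gprod G H)} :=
  [ffun x => (p.1 x, p.2 x)].
have pair_inj : injective pair.
  move=> [g h] [g' h'] /ffunP eq_pair.
  by congr (_, _); apply/ffunP => x; have := eq_pair x; rewrite !ffunE => -[].
rewrite -(card_imset _ pair_inj); apply: eq_card => f; rewrite !inE.
apply/idP/imsetP => [/is_homP[fr fe] | [[g h]]].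
  exists ([ffun x => (f x).1], [ffun x => (f x).2]); last first.
    by apply/ffunP => x; rewrite !ffunE; case: (f x).
  rewrite !inE; apply/andP; split; apply/is_homP; split=> x y; rewrite !ffunE;
    by [move/fr; rewrite /= /prod_adj negb_or => /andP[] | move/fe ->].
rewrite !inE => /andP[/is_homP[gr ge] /is_homP[hr he]] ->.
apply/is_homP; split=> x y; rewrite !ffunE /= /prod_adj /=.
  by move=> rxy; rewrite negb_or gr ?hr.
by move=> exy; rewrite (ge _ _ exy) (he _ _ exy).
Qed.

Lemma hom_count_K1 : hom_count K1 = 1.
Proof.
rewrite /hom_count (_ : homs K1 = setT) ?cardsT ?card_ffun ?card_unit ?exp1n //.
by apply/setP => f; rewrite !inE; apply/is_homP; split=> x y //= _; case: (f x); case: (f y).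
Qed.

Lemma hom_count_gempty : 0 < #|T| -> hom_count gempty = 0.
Proof.
case/card_gt0P => x _; apply/eqP; rewrite cards_eq0.
by apply/eqP/setP => f; case: (f x).
Qed.

Lemma hom_count_void G : #|T| = 0 -> hom_count G = 1.
Proof.
move=> T0; rewrite /hom_count (_ : homs G = setT) ?cardsT ?card_ffun ?T0 //.
apply/setP => f; rewrite !inE; apply/forallP => x.
by have := card0_eq T0 x; rewrite inE.
Qed.

Definition link : rel T := fun x y => [|| r x y, r y x, e x y | e y x].

Definition connected_pattern : Prop := forall x y, connect link x y.

Lemma link_sym : symmetric link.
Proof. by move=> x y; rewrite /link; case: (r x y) (r y x) (e x y) (e y x) => [] [] [] []. Qed.

Lemma connected_patternP x0 : (forall y, connect link x0 y) -> connected_pattern.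
Proof.
move=> x0_conn x y; apply: connect_trans (x0_conn y).
by rewrite (sym_connect_sym link_sym).
Qed.

Definition disconnected_pairs : {set T * T} := [set p | ~~ connect link p.1 p.2].

Lemma is_hom_merge (A : {pred T}) G (g h : {ffun T -> gV G}) :
    closed link A -> is_hom g -> is_hom h ->
  is_hom [ffun x => if x \in A then g x else h x].
Proof.
move=> A_closed /is_homP[gr ge] /is_homP[hr he]; apply/is_homP.
split=> x y; rewrite !ffunE => rel_xy; rewrite -(A_closed x y) /link ?rel_xy ?orbT //.
  by case: (x \in A); [apply: gr | apply: hr].
by case: (x \in A); [apply: ge | apply: he].
Qed.

Lemma hom_count_gjoin G H : 0 < #|T| -> connected_pattern ->
  hom_count (gjoin G H) = hom_count G + hom_count H.
Proof.
move=> /card_gt0P[x0 _] conn.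
pose is_left (z : gV (gjoin G H)) := if z is inl _ then true else false.
have codom_inl z : (z \in codom inl) = is_left z.
  by case: z => a; [rewrite codom_f | apply/negP => /codomP[]].
have codom_inr z : (z \in codom inr) = ~~ is_left z.
  by case: z => a; [apply/negP => /codomP[] | rewrite codom_f].
rewrite (@hom_count_embedding G (gjoin G H) inl inl_inj (fun _ _ => erefl)).
rewrite (@hom_count_embedding H (gjoin G H) inr inr_inj (fun _ _ => erefl)) -cardsUI.
set L := [set f in _ | _]; set R := [set f in _ | _].
have -> : L :&: R = set0.
  apply/setP => f; rewrite !inE; apply/negP.
  move=> /and3P[/andP[_ /forallP f_left] _ /forallP f_right].
  by have := f_right x0; rewrite codom_inr -codom_inl f_left.
suff -> : L :|: R = homs (gjoin G H) by rewrite cards0 addn0.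
apply/setP => f; rewrite !inE; apply/idP/idP => [/orP[] /andP[] // | f_hom].
have [fr fe] := is_homP _ f_hom.
have side_closed : closed link [pred x | is_left (f x)].
  move=> x y; rewrite !inE => /or4P[/fr | /fr | /fe -> | /fe ->] //;
    by case: (f x) (f y) => a [] b.
have side x : is_left (f x0) = is_left (f x).
  by have := closed_connect side_closed (conn x0 x); rewrite !inE.
rewrite f_hom /=; case: (boolP (is_left (f x0))) => [f_left | f_right]; apply/orP.
  by left; apply/forallP => x; rewrite codom_inl -side.
by right; apply/forallP => x; rewrite codom_inr -side.
Qed.

End Homs.

Definition glue (T : finType) (e : rel T) (A : {pred T}) (z : T) : rel T :=
  fun x y => e x y || (x \in A) && (y == z).

Lemma is_hom_glue (T : finType) (r e : rel T) A z G (f : {ffun T -> gV G}) :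
  is_hom r (glue e A z) f = is_hom r e f && [forall x, (x \in A) ==> (f x == f z)].
Proof.
apply/is_homP/andP => [[fr fe] | [/is_homP[fr fe] /forallP f_A]].
  split; first by apply/is_homP; split=> // x y exy; apply: fe; rewrite /glue exy.
  by apply/forallP => x; apply/implyP => xA; apply/eqP/fe; rewrite /glue xA eqxx orbT.
split=> // x y /orP[/fe // | /andP[xA /eqP ->]].
exact/eqP/(implyP (f_A x)).
Qed.

Lemma connect_link_glue (T : finType) (r e : rel T) A z :
  subrel (connect (link r e)) (connect (link r (glue e A z))).
Proof.
apply: connect_sub => x y lxy; apply: connect1.
by move: lxy; rewrite /link /glue; case/or4P => ->; rewrite ?orbT.
Qed.

Section Glue.
Variables (T : finType) (r e : rel T) (x0 y0 : T).
Hypothesis x0y0_disconnected : ~~ connect (link r e) x0 y0.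

Let S := connect (link r e) x0.

Lemma hom_count_glue G :
  hom_count r e G = hom_count r (glue e [predC S] x0) G * hom_count r (glue e S y0) G.
Proof.
have S_closed : closed (link r e) S := connect_closed (sym_connect_sym (link_sym r e)) x0.
have x0S : x0 \in S := connect0 _ x0.
have y0S : y0 \in S = false := negbTE x0y0_disconnected.
(* By [is_hom_glue] the two factors count the homs that are constant outside the
   component S of x0, resp. constant on S; merging two such maps along S is a
   bijection onto the homs for e. *)
rewrite /hom_count -cardsX.
pose merge (p : {ffun T -> gV G} * {ffun T -> gV G}) : {ffun T -> gV G} :=
  [ffun x => if x \in S then p.1 x else p.2 x].
have merge_inj : {in setX (homs r (glue e [predC S] x0) G) (homs r (glue e S y0) G) &,
                  injective merge}.
  move=> [g h] [g' h']; rewrite !inE !is_hom_glue /=.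
  move=> /andP[/andP[_ /forallP g_out] /andP[_ /forallP h_in]].
  move=> /andP[/andP[_ /forallP g'_out] /andP[_ /forallP h'_in]] /ffunP eq_merge.
  have eq_in x : x \in S -> g x = g' x by move=> xS; have := eq_merge x; rewrite !ffunE xS.
  have eq_out x : x \notin S -> h x = h' x.
    by move/negbTE=> xS; have := eq_merge x; rewrite !ffunE xS.
  congr (_, _); apply/ffunP => x; case: (boolP (x \in S)) => xS.
  - exact: eq_in.
  - have /implyP/(_ xS)/eqP -> := g_out x; have /implyP/(_ xS)/eqP -> := g'_out x.
    exact: eq_in.
  - have /implyP/(_ xS)/eqP -> := h_in x; have /implyP/(_ xS)/eqP -> := h'_in x.
    by apply: eq_out; rewrite y0S.
  - exact: eq_out.
rewrite -(card_in_imset merge_inj); apply: eq_card => f; rewrite inE.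
apply/idP/imsetP => [f_hom | [[g h]]].
  exists (merge (f, [ffun=> f x0]), merge ([ffun=> f y0], f)); last first.
    by apply/ffunP => x; rewrite !ffunE; case: (x \in S).
  rewrite !inE !is_hom_glue !is_hom_merge ?is_hom_const //=.
  apply/andP; split; apply/forallP => x; apply/implyP; rewrite !ffunE /=.
    by rewrite inE x0S => /negbTE ->.
  by rewrite y0S => ->.
rewrite !inE !is_hom_glue => /andP[/andP[g_hom _] /andP[h_hom _]] ->.
exact: is_hom_merge.
Qed.

Lemma connected_glue_out : connected_pattern r (glue e [predC S] x0).
Proof.
apply: (connected_patternP (x0 := x0)) => y; case: (boolP (y \in S)) => yS.
  exact: connect_link_glue.
by apply: connect1; rewrite /link /glue eqxx andbT (_ : y \in [predC S]) ?orbT.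
Qed.

Lemma disconnected_glue_in :
  disconnected_pairs r (glue e S y0) \proper disconnected_pairs r e.
Proof.
apply/properP; split.
  by apply/subsetP => -[x y]; rewrite !inE /=; apply: contra; apply: connect_link_glue.
exists (x0, y0); rewrite !inE /= ?x0y0_disconnected // negbK.
by apply: connect1; rewrite /link /glue (connect0 _ x0 : x0 \in S) eqxx !orbT.
Qed.

End Glue.

Lemma hom_count_eq_of_connected (C D : graph) :
    (forall (T : finType) (r e : rel T), 0 < #|T| -> connected_pattern r e ->
       hom_count r e C = hom_count r e D) ->
  forall (T : finType) (r e : rel T), hom_count r e C = hom_count r e D.
Proof.
move=> eq_connected T r e; have [n] := ubnP #|disconnected_pairs r e|.
elim: n e => // n IHn e lt_n.
have [T0 | /card_gt0P[x0 _]] := posnP #|T|; first by rewrite !hom_count_void.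
have T_gt0 : 0 < #|T| by apply/card_gt0P; exists x0.
have [/forallP x0_conn | ] := boolP [forall y, connect (link r e) x0 y].
  exact: eq_connected (connected_patternP x0_conn).
rewrite negb_forall => /existsP[y0 x0y0].
rewrite !(hom_count_glue x0y0) (eq_connected _ _ _ T_gt0 (connected_glue_out r e x0)).
by rewrite IHn // -ltnS (leq_trans _ lt_n) // ltnS proper_card ?disconnected_glue_in.
Qed.

Section Kernels.
Variables (T : finType) (r : rel T).

Definition kernel G (f : {ffun T -> gV G}) : {set T * T} := [set p | f p.1 == f p.2].

Definition rel_of_set (K : {set T * T}) : rel T := fun x y => (x, y) \in K.

Definition exact_count (K : {set T * T}) G : nat :=
  #|[set f in homs r [rel x y | false] G | kernel f == K]|.

Lemma is_hom_rel_of_set K G (f : {ffun T -> gV G}) :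
  is_hom r (rel_of_set K) f = is_hom r [rel x y | false] f && (K \subset kernel f).
Proof.
apply/is_homP/andP => [[fr fK] | [/is_homP[fr _] /subsetP K_ker]].
  split; first by apply/is_homP.
  by apply/subsetP => -[x y] /fK; rewrite inE => ->.
by split=> // x y /K_ker; rewrite inE => /eqP.
Qed.

Lemma hom_count_rel_of_set K G :
  hom_count r (rel_of_set K) G = \sum_(K' : {set T * T} | K \subset K') exact_count K' G.
Proof.
rewrite /hom_count -sum1_card.
rewrite (partition_big (@kernel G) (fun K' : {set T * T} => K \subset K')).
  apply: eq_bigr => K' K_K'; rewrite /exact_count -sum1_card; apply: eq_bigl => f.
  by rewrite !inE is_hom_rel_of_set; case: eqP => [-> | _]; rewrite ?K_K' ?andbT ?andbF.
by move=> f; rewrite inE is_hom_rel_of_set => /andP[].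
Qed.

Lemma exact_count_eq C D :
  (forall e : rel T, hom_count r e C = hom_count r e D) ->
  forall K, exact_count K C = exact_count K D.
Proof.
move=> eq_count K; have [n] := ubnP #|~: K|; elim: n K => // n IHn K lt_n.
have eq_above : \sum_(K' : {set T * T} | (K \subset K') && (K' != K)) exact_count K' C =
                \sum_(K' : {set T * T} | (K \subset K') && (K' != K)) exact_count K' D.
  apply: eq_bigr => K' /andP[K_K' K'_neq_K]; apply: IHn.
  rewrite -ltnS (leq_trans _ lt_n) // ltnS proper_card // properC.
  by rewrite properEneq eq_sym K'_neq_K.
have := hom_count_rel_of_set K C; rewrite eq_count hom_count_rel_of_set.
by rewrite (bigD1 K) // [in RHS](bigD1 K) //= eq_above => /addIn.
Qed.

End Kernels.

Lemma giso_of_nonadj_injections G H (f : gV G -> gV H) (g : gV H -> gV G) :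
    injective f -> {homo f : x y / ~~ gadj x y} ->
    injective g -> {homo g : x y / ~~ gadj x y} ->
  giso G H.
Proof.
move=> f_inj f_homo g_inj g_homo.
pose nonadj_pairs (K : graph) := [set p : gV K * gV K | ~~ gadj p.1 p.2].
pose f2 (p : gV G * gV G) := (f p.1, f p.2).
pose g2 (p : gV H * gV H) := (g p.1, g p.2).
have f2_inj : injective f2 by move=> [a b] [c d] [/f_inj -> /f_inj ->].
have g2_inj : injective g2 by move=> [a b] [c d] [/g_inj -> /g_inj ->].
have f2_sub : f2 @: nonadj_pairs G \subset nonadj_pairs H.
  apply/subsetP => _ /imsetP[[a b] nadj_ab ->].
  by rewrite !inE /= in nadj_ab *; apply: f_homo.
have g2_sub : g2 @: nonadj_pairs H \subset nonadj_pairs G.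
  apply/subsetP => _ /imsetP[[a b] nadj_ab ->].
  by rewrite !inE /= in nadj_ab *; apply: g_homo.
have f2_onto : f2 @: nonadj_pairs G = nonadj_pairs H.
  apply/eqP; rewrite eqEcard f2_sub card_imset //.
  by rewrite -(card_imset _ g2_inj) subset_leq_card.
exists f; split; first exact: inj_card_bij f_inj (leq_card g g_inj).
move=> x y; apply/idP/idP; apply: contraLR; first exact: f_homo.
move=> nadj_fxy; have : f2 (x, y) \in f2 @: nonadj_pairs G by rewrite f2_onto inE.
by rewrite mem_imset // inE.
Qed.

Lemma exists_nonadj_injection G H :
    (forall e : rel (gV G), hom_count (fun x y => ~~ gadj x y) e G =
                            hom_count (fun x y => ~~ gadj x y) e H) ->
  exists2 f : gV G -> gV H, injective f & {homo f : x y / ~~ gadj x y}.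
Proof.
(* Maps with exactly the diagonal as kernel are the injective ones; for G the
   identity is such a map. *)
move=> eq_count; pose diagonal := [set p : gV G * gV G | p.1 == p.2].
have : 0 < exact_count (fun x y => ~~ gadj x y) diagonal H.
  rewrite -(exact_count_eq eq_count); apply/card_gt0P; exists [ffun x => x].
  rewrite !inE; apply/andP; split; first by apply/is_homP; split=> x y; rewrite !ffunE.
  by apply/eqP/setP => p; rewrite !inE !ffunE.
case/card_gt0P => f; rewrite !inE => /andP[/is_homP[f_homo _] /eqP ker_f].
exists f => [x y fxy | x y]; last exact: f_homo.
have : (x, y) \in kernel f by rewrite inE /= fxy.
by rewrite ker_f inE => /eqP.
Qed.

Lemma giso_of_hom_count G H :
  (forall (T : finType) (r e : rel T), hom_count r e G = hom_count r e H) -> giso G H.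
Proof.
move=> eq_count.
have [f f_inj f_homo] := exists_nonadj_injection (fun e => eq_count _ _ e).
have [g g_inj g_homo] := exists_nonadj_injection (fun e => esym (eq_count _ _ e)).
exact: giso_of_nonadj_injections f_inj f_homo g_inj g_homo.
Qed.

Lemma sqrt2_irrational (m n : int) : (m ^+ 2 = 2 * n ^+ 2)%R -> n = 0.
Proof.
move=> /(congr1 absz); rewrite abszM !abszX -[absz 2]/2%N => eq_sq.
apply/eqP; rewrite -absz_eq0; apply: contraLR isT => n_neq0.
have := congr1 (logn 2) eq_sq; rewrite lognM ?expn_gt0 ?lt0n ?n_neq0 //.
by rewrite !lognX (logn_prime 2 (isT : prime 2)); lia.
Qed.

Section PatternCharacter.
Variables (T : finType) (r e : rel T).
Hypotheses (T_gt0 : 0 < #|T|) (connected : connected_pattern r e).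
Local Open Scope ring_scope.

Definition zeval (x : zyk) : int := (hom_count r e x.1)%:Z - (hom_count r e x.2)%:Z.

Lemma zeval_zeq x y : zeq x y -> zeval x = zeval y.
Proof.
move=> [E /(hom_count_giso r e)]; rewrite !hom_count_gjoin // /zeval; lia.
Qed.

Lemma zeval_zmul x y : zeval (zmul x y) = zeval x * zeval y.
Proof. by rewrite /zeval /= !hom_count_gjoin // !hom_count_gprod !PoszD !PoszM; ring. Qed.

Lemma zeval_zone : zeval zone = 1.
Proof. by rewrite /zeval /= hom_count_K1 hom_count_gempty. Qed.

Lemma zeval_ztwo : zeval ztwo = 2.
Proof. by rewrite /zeval /= hom_count_gjoin // hom_count_K1 hom_count_gempty. Qed.

End PatternCharacter.

Lemma zeq_zzero_of_giso C D : giso C D -> zeq (C, D) zzero.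
Proof.
move=> [f [[g fK gK] f_adj]]; exists gempty.
pose F (z : gV (gjoin (gjoin C gempty) gempty)) : gV (gjoin (gjoin gempty D) gempty) :=
  match z with inl (inl c) => inl (inr (f c)) | inl (inr v) | inr v => match v with end end.
pose G (z : gV (gjoin (gjoin gempty D) gempty)) : gV (gjoin (gjoin C gempty) gempty) :=
  match z with inl (inr d) => inl (inl (g d)) | inl (inl v) | inr v => match v with end end.
exists F; split; last by case=> [[c|[]]|[]] [[c'|[]]|[]] //=; apply: f_adj.
by exists G; [case=> [[c|[]]|[]] /=; rewrite fK | case=> [[[]|d]|[]] /=; rewrite gK].
Qed.

Theorem mainTheorem15 : ~ exists x : zfrac, fsq_eq x ftwo.
Proof.
move=> [[[A B] [C D] den_neq0] sq_eq_two].
suff /den_neq0 [] : zeq (C, D) zzero.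
apply/zeq_zzero_of_giso/giso_of_hom_count/hom_count_eq_of_connected => T r e T_gt0 conn.
have := zeval_zeq T_gt0 conn sq_eq_two.
rewrite !(zeval_zmul T_gt0 conn) zeval_zone ?zeval_ztwo // mulr1 -expr2 => /sqrt2_irrational.
by rewrite /zeval => /eqP; rewrite subr_eq0 => /eqP [].
Qed.
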